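(* For all positive integers $n$ and $k$, \[ |\mathrm{Hom}(P_n,P_k)| \;=\; k\cdot 2^{n-1} \;-\; \sum_{i=0}^{n-2} 2^{\,n-1-i}\sum_{j\in\mathbb Z}\left(\binom{i}{\lceil i/2\rceil - j(k+1)} - \binom{i}{\lfloor (i+k+1)/2\rfloor - j(k+1)}\right). \]
   Context: All graphs are finite, undirected, without loops or multiple edges. For a positive integer $m$, $P_m$ denotes the path with vertex set $[m]=\{1,\dots,m\}$ in which $i$ and $j$ are adjacent iff $|i-j|=1$. A homomorphism $G\to H$ is a map $f:V(G)\to V(H)$ sending adjacent vertices to adjacent vertices; $\mathrm{Hom}(G,H)$ is the set of such maps. Convention: $\binom{a}{b}=0$ if $b<0$ or $b>a$ (so each inner sum over $j$ is finite). *)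

From HB Require Import structures.
From mathcomp Require Import all_boot all_order all_algebra.
Set Implicit Arguments. Unset Strict Implicit. Unset Printing Implicit Defensive.
Import Order.TTheory GRing.Theory Num.Theory.

(* The path P_m, with vertex set 'I_m = {0,...,m-1} (a relabelling of [m] = {1..m}
   by i |-> i-1); i ~ j iff |i - j| = 1. *)
Definition path_adj (m : nat) (i j : 'I_m) : bool :=
  (i.+1 == j :> nat) || (j.+1 == i :> nat).

Definition is_hom (n k : nat) (f : {ffun 'I_n -> 'I_k}) : bool :=
  [forall i : 'I_n, forall j : 'I_n, path_adj i j ==> path_adj (f i) (f j)].

Definition Hom_path (n k : nat) : {set {ffun 'I_n -> 'I_k}} :=
  [set f | is_hom f].

(* Binomial coefficient with integer lower index: binom(a, b) = 0 if b < 0;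
   for b > a, 'C(a, b) = 0 already. *)
Definition binz (a : nat) (b : int) : int :=
  match b with
  | Posz c => ('C(a, c))%:Z
  | Negz _ => 0%R
  end.

(* Finite truncation of a sum over j in Z: sum over j in [-N, N]. *)
Definition zsum_upto (N : nat) (F : int -> int) : int :=
  (\sum_(t < (N + N).+1) F (t%:Z - N%:Z))%R.

From HB Require Import structures.
From mathcomp Require Import all_boot all_order all_algebra.
From mathcomp Require Import zify ring.
Set Implicit Arguments. Unset Strict Implicit. Unset Printing Implicit Defensive.
Import Order.TTheory GRing.Theory Num.Theory.
Local Open Scope ring_scope.

(* A homomorphism P_{m+1} -> P_k is a walk with m steps in P_k.  Let
   [walks k i e] be the number of i-step walks in P_k starting at e (and 0
   when e is not a vertex).  The proof has three parts.
   (1) Peeling off the last vertex of a homomorphism shows that the number of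
       homomorphisms P_{m+1} -> P_k ending at v is [walks k m v], so
       |Hom(P_{m+1}, P_k)| = s_m := sum_v walks k m v.
   (2) Each walk can be prolonged in two ways, except at the end vertices
       0 and k-1, which are symmetric: s_{m+1} = 2 s_m - 2 walks k m 0,
       hence s_m = k 2^m - sum_{i<m} 2^(m-i) walks k i 0.
   (3) Reflection principle: for 0 <= e <= k the difference
       walks k i e - walks k i (e-1) obeys the boundary-free recursion
       F_{i+1}(e) = F_i(e-1) + F_i(e+1), because its initial value is
       invariant under the reflections e |-> -1-e and e |-> 2k+1-e.  Free
       walk sums are computed by binomial coefficients, which gives
       walks k i 0 as the alternating binomial sum of the theorem. *)

Definition indz (b : bool) : int := if b then 1 else 0.

Definition halfz (y : int) : int := divz y 2.

Lemma dvdzN d m : dvdz d (- m) = dvdz d m.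
Proof. by rewrite /dvdz abszN. Qed.

Lemma dvdzDMl d m q : dvdz d (m + q * d) = dvdz d m.
Proof.
apply/idP/idP => /dvdzP [r def_m]; apply/dvdzP.
  by exists (r - q); rewrite mulrBl -def_m; ring.
by exists (r + q); rewrite mulrDl def_m.
Qed.

Lemma dvdz_small (K : nat) (c : int) : (`|c|%N < K)%N -> dvdz K%:Z c = (c == 0).
Proof.
move=> c_ltK; case: eqP => [->|/eqP c_neq0]; first exact: dvdz0.
apply/negP; rewrite /dvdz /= => /dvdn_leq; rewrite absz_gt0 leqNgt c_ltK.
by move=> /(_ c_neq0).
Qed.

Lemma binzE i (c : int) :
  binz i c = if (0 <= c) && (c <= i%:Z) then ('C(i, `|c|%N))%:Z else 0.
Proof.
case: c => [m|m] //=; rewrite lez_nat.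
by case: (leqP m i) => // lt_i_m; rewrite bin_small.
Qed.

Lemma binz0 (c : int) : binz 0 c = indz (c == 0).
Proof.
rewrite binzE /indz; case: ifP => c_range; first by have -> : c = 0 by lia.
by case: eqP => // c0; rewrite c0 lexx in c_range.
Qed.

Lemma binzS i (c : int) : binz i.+1 c = binz i c + binz i (c - 1).
Proof. by case: c => [[|m]|m] //=; rewrite ?bin0 // binS PoszD subn1. Qed.

Lemma binz_sym i (c : int) : binz i c = binz i (i%:Z - c).
Proof.
rewrite !binzE.
have -> : (0 <= i%:Z - c) && (i%:Z - c <= i%:Z) = (0 <= c) && (c <= i%:Z) by lia.
case: ifP => // c_range.
have -> : `|i%:Z - c|%N = (i - `|c|)%N by lia.
by rewrite bin_sub //; lia.
Qed.

Definition in_path (k : nat) (e : int) : bool := (0 <= e) && (e < k%:Z).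

Fixpoint walks (k i : nat) (e : int) : int :=
  match i with
  | 0 => indz (in_path k e)
  | i'.+1 => if in_path k e then walks k i' (e - 1) + walks k i' (e + 1) else 0
  end.

Lemma walks_out k i e : ~~ in_path k e -> walks k i e = 0.
Proof. by case: i => [|i] /= /negbTE ->. Qed.

Lemma walksS k i e :
  in_path k e -> walks k i.+1 e = walks k i (e - 1) + walks k i (e + 1).
Proof. by move=> /= ->. Qed.

(* The reflection e |-> k-1-e is an automorphism of P_k. *)
Lemma walks_sym k i e e' : e + e' = k%:Z - 1 -> walks k i e = walks k i e'.
Proof.
elim: i e e' => [|i IH] e e' sum_e /=; first by congr indz; rewrite /in_path; lia.
have -> : in_path k e' = in_path k e by rewrite /in_path; lia.
case: ifP => // _; rewrite addrC (IH (e - 1) (e' + 1)); last by lia.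
by rewrite (IH (e + 1) (e' - 1)) //; lia.
Qed.

Lemma is_homP n k (f : {ffun 'I_n -> 'I_k}) :
  reflect (forall i j, path_adj i j -> path_adj (f i) (f j)) (is_hom f).
Proof.
apply: (iffP forallP) => [f_hom i j|f_hom i].
  by move: (f_hom i) => /forallP /(_ j) /implyP.
by apply/forallP => j; apply/implyP; apply: f_hom.
Qed.

Lemma path_adj_sym m (i j : 'I_m) : path_adj i j = path_adj j i.
Proof. by rewrite /path_adj orbC. Qed.

Lemma path_adj_lift m (i j : 'I_m.+1) :
  path_adj (lift ord_max i) (lift ord_max j) = path_adj i j.
Proof. by rewrite /path_adj !lift_max. Qed.

Lemma path_adj_last m (i : 'I_m.+1) :
  path_adj (lift ord_max i) ord_max = (i == ord_max).
Proof.
rewrite /path_adj lift_max /=; apply/idP/eqP => [adj|->] /=; last by rewrite eqxx.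
by apply: val_inj => /=; move: adj (ltn_ord i); lia.
Qed.

Definition homs_ending k m (v : 'I_k) : {set {ffun 'I_m.+1 -> 'I_k}} :=
  [set f | is_hom f && (f ord_max == v)].
Arguments homs_ending : clear implicits.

Definition drop_last k m (f : {ffun 'I_m.+2 -> 'I_k}) : {ffun 'I_m.+1 -> 'I_k} :=
  [ffun j => f (lift ord_max j)].

Definition extend_last k m (h : {ffun 'I_m.+1 -> 'I_k}) (v : 'I_k) :
  {ffun 'I_m.+2 -> 'I_k} :=
  [ffun i => if unlift ord_max i is Some j then h j else v].

Lemma drop_extend_last k m (h : {ffun 'I_m.+1 -> 'I_k}) v :
  drop_last (extend_last h v) = h.
Proof. by apply/ffunP => j; rewrite !ffunE liftK. Qed.

Lemma drop_last_hom k m (v : 'I_k) (f : {ffun 'I_m.+2 -> 'I_k}) :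
  f \in homs_ending k m.+1 v ->
  is_hom (drop_last f) && path_adj (drop_last f ord_max) v.
Proof.
rewrite inE => /andP [/is_homP f_hom /eqP <-]; apply/andP; split.
  by apply/is_homP => i j adj_ij; rewrite !ffunE; apply: f_hom; rewrite path_adj_lift.
by rewrite ffunE; apply: f_hom; rewrite path_adj_last.
Qed.

Lemma extend_last_hom k m (v : 'I_k) (h : {ffun 'I_m.+1 -> 'I_k}) :
  is_hom h -> path_adj (h ord_max) v -> extend_last h v \in homs_ending k m.+1 v.
Proof.
move=> /is_homP h_hom adj_v.
rewrite inE ffunE unlift_none eqxx andbT; apply/is_homP => i j; rewrite !ffunE.
case: (unliftP ord_max i) => [i' ->|->]; case: (unliftP ord_max j) => [j' ->|->].
- by rewrite path_adj_lift; apply: h_hom.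
- by rewrite path_adj_last => /eqP ->.
- by rewrite path_adj_sym path_adj_last => /eqP ->; rewrite path_adj_sym.
- by rewrite /path_adj /=; lia.
Qed.

Lemma drop_last_inj k m (v : 'I_k) : {in homs_ending k m.+1 v &, injective (@drop_last k m)}.
Proof.
move=> f1 f2; rewrite !inE => /andP [_ /eqP f1v] /andP [_ /eqP f2v] /ffunP eq_drop.
apply/ffunP => i; case: (unliftP ord_max i) => [j ->|->]; last by rewrite f1v f2v.
by move: (eq_drop j); rewrite !ffunE.
Qed.

Lemma card_homs_ending_step k m (v : 'I_k) :
  #|homs_ending k m.+1 v| =
  #|[set h : {ffun 'I_m.+1 -> 'I_k} | is_hom h && path_adj (h ord_max) v]|.
Proof.
rewrite -(card_in_imset (@drop_last_inj k m v)); apply: eq_card => h.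
rewrite [in RHS]inE; apply/imsetP/idP => [[f f_end ->]|/andP [h_hom adj_v]].
  exact: drop_last_hom.
by exists (extend_last h v); rewrite ?drop_extend_last ?extend_last_hom.
Qed.

Lemma card_split (T : finType) k (P : pred T) (g : T -> 'I_k) (Q : pred 'I_k) :
  #|[set x | P x && Q (g x)]| = (\sum_(u | Q u) #|[set x | P x && (g x == u)]|)%N.
Proof.
rewrite -sum1_card (partition_big g Q); last by move=> x; rewrite inE => /andP [].
apply: eq_bigr => u Qu; rewrite -sum1_card; apply: eq_bigl => x; rewrite !inE.
by case: (eqVneq (g x) u) => [->|]; rewrite ?Qu ?andbT ?andbF.
Qed.

Lemma card_homs_split k m (Q : pred 'I_k) :
  (#|[set h : {ffun 'I_m.+1 -> 'I_k} | is_hom h && Q (h ord_max)]|)%:Z =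
  \sum_(u | Q u) (#|homs_ending k m u|)%:Z.
Proof. by rewrite card_split (big_morph Posz PoszD (erefl _)). Qed.

Lemma sum_vertex_eq k (g : int -> int) (w : int) :
  (forall e, ~~ in_path k e -> g e = 0) ->
  \sum_(u : 'I_k | u%:Z == w) g u%:Z = g w.
Proof.
move=> g_out; case: (boolP (in_path k w)) => w_in; last first.
  rewrite big_pred0 ?g_out // => u; apply/negbTE/negP => /eqP u_w.
  by move/negP: w_in; apply; rewrite -u_w /in_path; move: (ltn_ord u); lia.
have w_lt : (absz w < k)%N by move: w_in; rewrite /in_path; lia.
rewrite (bigD1 (Ordinal w_lt)) /=; last by apply/eqP; move: w_in; rewrite /in_path; lia.
rewrite big_pred0 ?addr0; first by congr g; move: w_in; rewrite /in_path; lia.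
move=> u; apply/negbTE/negP => /andP [/eqP u_w /eqP]; apply.
by apply: val_inj => /=; lia.
Qed.

(* Homomorphisms ending at v are counted by walks starting at v (read the
   homomorphism backwards). *)
Lemma card_homs_ending k m (v : 'I_k) : (#|homs_ending k m v|)%:Z = walks k m v.
Proof.
elim: m v => [|m IH] v.
  have -> : homs_ending k 0 v = [set [ffun => v]].
    apply/setP => f; rewrite !inE.
    have -> : is_hom f.
      by apply/is_homP => i j; rewrite /path_adj; move: (ltn_ord i) (ltn_ord j); lia.
    apply/eqP/eqP => [f_v|->]; last by rewrite ffunE.
    apply/ffunP => i; rewrite ffunE -f_v; congr (f _); apply: val_inj => /=.
    by move: (ltn_ord i); lia.
  by rewrite cards1 /= /indz /in_path; move: (ltn_ord v); case: ifP => //; lia.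
rewrite card_homs_ending_step (card_homs_split m (fun u => path_adj u v)).
under eq_bigr do rewrite IH.
rewrite walksS /in_path; last by move: (ltn_ord v); lia.
rewrite (bigID (fun u : 'I_k => u%:Z == v%:Z - 1)) /=.
rewrite -(@sum_vertex_eq k _ (v%:Z - 1) (@walks_out k m)).
rewrite -(@sum_vertex_eq k _ (v%:Z + 1) (@walks_out k m)).
by congr (_ + _); apply: eq_bigl => u; rewrite /path_adj; lia.
Qed.

Lemma card_Hom_path k m : (#|Hom_path m.+1 k|)%:Z = \sum_(v < k) walks k m v.
Proof.
have -> : Hom_path m.+1 k = [set h | is_hom h && predT (h ord_max)].
  by apply/setP => f; rewrite !inE andbT.
by rewrite card_homs_split; apply: eq_bigr => v _; rewrite card_homs_ending.
Qed.

(* Part (2).  Shifting a vertex sum by one step loses one end vertex; by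
   the symmetry of P_k both end vertices contribute walks k i 0. *)
Lemma sum_walks_pred k i :
  \sum_(v < k.+1) walks k.+1 i (v%:Z - 1) = \sum_(v < k.+1) walks k.+1 i v - walks k.+1 i 0.
Proof.
rewrite big_ord_recl walks_out /in_path //= add0r big_ord_recr /=.
rewrite (@walks_sym k.+1 i k 0); last by lia.
rewrite addrK; apply: eq_bigr => v _; congr walks; rewrite /bump leq0n add1n; lia.
Qed.

Lemma sum_walks_succ k i :
  \sum_(v < k.+1) walks k.+1 i (v%:Z + 1) = \sum_(v < k.+1) walks k.+1 i v - walks k.+1 i 0.
Proof.
rewrite big_ord_recr /= (@walks_out k.+1 i (k%:Z + 1)) /in_path ?addr0; last by lia.
rewrite big_ord_recl /= addrC addKr; apply: eq_bigr => v _; congr walks.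
by rewrite /bump leq0n add1n; lia.
Qed.

(* Every walk is prolonged in two ways, except from the two end vertices. *)
Lemma sum_walksS k i : (0 < k)%N ->
  \sum_(v < k) walks k i.+1 v = 2 * \sum_(v < k) walks k i v - 2 * walks k i 0.
Proof.
case: k => // k _.
rewrite (eq_bigr (fun v : 'I_k.+1 => walks k.+1 i (v%:Z - 1) + walks k.+1 i (v%:Z + 1))).
  by rewrite big_split /= sum_walks_pred sum_walks_succ; ring.
by move=> v _; rewrite walksS /in_path //; move: (ltn_ord v); lia.
Qed.

Lemma sum_walks k m : (0 < k)%N ->
  \sum_(v < k) walks k m v = (k * 2 ^ m)%:Z - \sum_(i < m) (2 ^ (m - i))%:Z * walks k i 0.
Proof.
move=> k_gt0; elim: m => [|m IH].
  rewrite big_ord0 subr0 expn0 muln1 (eq_bigr (fun _ => 1)) ?sumr_const ?card_ord ?natz //.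
  by move=> v _; rewrite /= /indz /in_path; move: (ltn_ord v); case: ifP => //; lia.
have double_weights : \sum_(i < m) (2 ^ (m.+1 - i))%:Z * walks k i 0 =
    2 * \sum_(i < m) (2 ^ (m - i))%:Z * walks k i 0.
  rewrite mulr_sumr; apply: eq_bigr => i _.
  by rewrite subSn ?expnS ?PoszM ?mulrA //; apply: ltnW.
rewrite sum_walksS // IH big_ord_recr /= subSnn expn1 double_weights.
rewrite expnS mulnCA !PoszM; ring.
Qed.

(* Part (3).  [free_walks a i e] sums the weight a over the endpoints of all
   i-step walks from e in the infinite path Z; it satisfies the recursion of
   [walks] without boundary conditions. *)
Fixpoint free_walks (a : int -> int) (i : nat) (e : int) : int :=
  match i with
  | 0 => a e
  | i'.+1 => free_walks a i' (e - 1) + free_walks a i' (e + 1)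
  end.

Lemma free_walks_reflect (a : int -> int) (c : int) :
  (forall e e', e + e' = c -> a e = a e') ->
  forall i e e', e + e' = c -> free_walks a i e = free_walks a i e'.
Proof.
move=> a_sym; elim=> [|i IH] e e' sum_e /=; first exact: a_sym.
rewrite addrC (IH (e - 1) (e' + 1)); last by lia.
by rewrite (IH (e + 1) (e' - 1)) //; lia.
Qed.

(* The initial weight of the reflection principle in P_k: +1 on the e with
   floor(-e/2) a multiple of k+1, -1 on the e with floor((k+1-e)/2) a
   multiple of k+1.  On the window [0, k] it is the difference of the
   indicators of P_k and of its translate by one. *)
Definition reflect_base (k : nat) (e : int) : int :=
  indz (dvdz (k.+1)%:Z (halfz (- e))) - indz (dvdz (k.+1)%:Z (halfz ((k.+1)%:Z - e))).

Lemma reflect_base_symL k e e' : e + e' = -1 -> reflect_base k e = reflect_base k e'.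
Proof.
move=> sum_e; have -> : e = -1 - e' by lia.
rewrite /reflect_base.
have -> : halfz (- (-1 - e')) = - halfz (- e') by rewrite /halfz; lia.
have -> : halfz ((k.+1)%:Z - (-1 - e')) = - halfz ((k.+1)%:Z - e') + 1 * (k.+1)%:Z
  by rewrite /halfz; lia.
by rewrite dvdzDMl !dvdzN.
Qed.

Lemma reflect_base_symR k e e' :
  e + e' = 2 * (k.+1)%:Z - 1 -> reflect_base k e = reflect_base k e'.
Proof.
move=> sum_e; have -> : e = 2 * (k.+1)%:Z - 1 - e' by lia.
rewrite /reflect_base.
have -> : halfz (- (2 * (k.+1)%:Z - 1 - e')) = - halfz (- e') + (-1) * (k.+1)%:Z
  by rewrite /halfz; lia.
have -> : halfz ((k.+1)%:Z - (2 * (k.+1)%:Z - 1 - e')) = - halfz ((k.+1)%:Z - e')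
  by rewrite /halfz; lia.
by rewrite dvdzDMl !dvdzN.
Qed.

Lemma reflect_base_window k e : 0 <= e <= k%:Z ->
  reflect_base k e = indz (in_path k e) - indz (in_path k (e - 1)).
Proof.
move=> e_range; rewrite /reflect_base !dvdz_small /halfz; try lia.
rewrite /indz /in_path; repeat case: ifP; lia.
Qed.

(* At the two ends of the
   window the missing boundary term is supplied by a reflection. *)
Lemma walks_diff k i e : (0 < k)%N -> 0 <= e <= k%:Z ->
  walks k i e - walks k i (e - 1) = free_walks (reflect_base k) i e.
Proof.
move=> k_gt0; elim: i e => [|i IH] e e_range; first by rewrite /= reflect_base_window.
rewrite [free_walks _ _ _]/=; set F := free_walks (reflect_base k) i.
have IH_at x : 0 <= x <= k%:Z -> walks k i x - walks k i (x - 1) = F x := IH x.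
have out j x : x < 0 \/ k%:Z <= x -> walks k j x = 0.
  by move=> x_out; apply: walks_out; rewrite /in_path; lia.
have [e0|[e_in|ek]] : e = 0 \/ 0 < e < k%:Z \/ e = k%:Z by lia.
- have -> : F (e - 1) = F e.
    by apply: (free_walks_reflect (@reflect_base_symL k)); lia.
  rewrite walksS /in_path ?(out i.+1) -?IH_at ?(out i (e - 1)); try lia.
  by rewrite addrK; ring.
- rewrite !walksS /in_path ?subrK -?IH_at; try lia.
  by rewrite addrK; ring.
- have -> : F (e + 1) = F e.
    by apply: (free_walks_reflect (@reflect_base_symR k)); lia.
  rewrite (out i.+1 e) ?walksS /in_path ?subrK -?IH_at ?(out i e); try lia.
  ring.
Qed.

Lemma eq_zsum N (F G : int -> int) :
  (forall j, F j = G j) -> zsum_upto N F = zsum_upto N G.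
Proof. by move=> eqFG; apply: eq_bigr. Qed.

Lemma zsumB N (F G : int -> int) :
  zsum_upto N (fun j => F j - G j) = zsum_upto N F - zsum_upto N G.
Proof. exact: sumrB. Qed.

(* The free walk sums of [reflect_base k] in closed form, as a (truncated)
   alternating binomial sum: grouping walks by their number c of down-steps,
   binom(i, c) of the i-step walks from e end at e + i - 2c. *)
Definition binom_walks (k N i : nat) (e : int) : int :=
  zsum_upto N (fun j : int =>
    binz i (halfz (i%:Z - e) - j * (k.+1)%:Z)
    - binz i (halfz (i%:Z + (k.+1)%:Z - e) - j * (k.+1)%:Z)).

(* By Pascal's rule, the binomial sums satisfy the free walk recursion. *)
Lemma binom_walksS k N i e :
  binom_walks k N i.+1 e = binom_walks k N i (e - 1) + binom_walks k N i (e + 1).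
Proof.
rewrite /binom_walks /zsum_upto -big_split; apply: eq_bigr => t _ /=.
have pascal (x d : int) : binz i.+1 (x - d) = binz i (x - d) + binz i (x - 1 - d).
  by rewrite binzS; congr (_ + binz i _); ring.
have -> : halfz (i.+1%:Z - e) = halfz (i%:Z - (e - 1)) by rewrite /halfz; lia.
have -> : halfz (i%:Z - (e + 1)) = halfz (i%:Z - (e - 1)) - 1 by rewrite /halfz; lia.
have -> : halfz (i.+1%:Z + (k.+1)%:Z - e) = halfz (i%:Z + (k.+1)%:Z - (e - 1))
  by rewrite /halfz; lia.
have -> : halfz (i%:Z + (k.+1)%:Z - (e + 1)) = halfz (i%:Z + (k.+1)%:Z - (e - 1)) - 1
  by rewrite /halfz; lia.
by rewrite !pascal; ring.
Qed.

Lemma zsum_indz_multiple (N K : nat) (c : int) : (0 < K)%N -> `|c| <= (N * K)%N%:Z ->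
  zsum_upto N (fun j => indz (c - j * K%:Z == 0)) = indz (dvdz K%:Z c).
Proof.
move=> K_gt0 c_le; rewrite /zsum_upto.
case: (boolP (dvdz K%:Z c)) => [/dvdzP [q def_c]|Ndvd_c]; last first.
  rewrite big1 // => t _; case: eqP => // /eqP; rewrite subr_eq0 => /eqP c_eq.
  by move/negP: Ndvd_c; case; apply/dvdzP; exists (t%:Z - N%:Z).
have q_le : `|q| <= N%:Z by move: c_le; rewrite def_c; nia.
have q_idx : (absz (q + N%:Z)%R < (N + N).+1)%N by lia.
rewrite (bigD1 (Ordinal q_idx)) //= big1 => [|t t_neq].
  have -> : (absz (q + N%:Z)%R)%:Z = q + N%:Z by lia.
  by rewrite def_c addrK subrr eqxx addr0.
case: eqP => // /eqP; rewrite def_c subr_eq0 => /eqP /(mulIf _) q_eq.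
move/negP: t_neq; case; apply/eqP/val_inj => /=.
have /q_eq : K%:Z != 0 by lia.
lia.
Qed.

Lemma free_walks_binom k N i e : (0 < N)%N -> i%:Z + `|e| <= N%:Z ->
  free_walks (reflect_base k) i e = binom_walks k N i e.
Proof.
move=> N_gt0; elim: i e => [|i IH] e e_le; last first.
  by rewrite binom_walksS /= -IH -?IH //; lia.
have NK_ge : (N + k <= N * k.+1)%N by nia.
rewrite /binom_walks zsumB; under [X in X - _]eq_zsum do rewrite binz0.
under [X in _ - X]eq_zsum do rewrite binz0.
rewrite !(zsum_indz_multiple (K := k.+1)) //; try by rewrite /halfz; lia.
by rewrite /reflect_base sub0r add0r.
Qed.

(* The binomial symmetry binom(i, c) = binom(i, i - c), with j |-> -j,
   trades floor(i/2) for ceil(i/2). *)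
Lemma zsum_binz_half (N K i : nat) :
  zsum_upto N (fun j => binz i ((i./2)%:Z - j * K%:Z)) =
  zsum_upto N (fun j => binz i ((uphalf i)%:Z - j * K%:Z)).
Proof.
rewrite uphalf_half; have := odd_double_half i.
case: (odd i) => /= def_i; last by rewrite add0n.
rewrite /zsum_upto (reindex_inj rev_ord_inj) /=; apply: eq_bigr => t _.
rewrite binz_sym subSS; congr binz; move: (ltn_ord t) => lt_t.
have -> : ((N + N - t)%N : int) = N%:Z + N%:Z - t%:Z by lia.
by rewrite -{1}def_i -muln2 !PoszD PoszM; ring.
Qed.

Lemma walks_from0 k N i : (0 < k)%N -> (i < N)%N ->
  walks k i 0 = zsum_upto N (fun j : int =>
    binz i ((uphalf i)%:Z - j * (k.+1)%:Z)
    - binz i (((i + k.+1)./2)%:Z - j * (k.+1)%:Z)).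
Proof.
move=> k_gt0 lt_iN.
rewrite -[walks k i 0]subr0 -{2}(@walks_out k i (0 - 1)) // walks_diff //.
rewrite (@free_walks_binom k N) ?normr0 ?addr0; try lia.
rewrite /binom_walks !zsumB -zsum_binz_half.
by congr (_ - _); apply: eq_zsum => j; rewrite /halfz !subr0 -?PoszD divz_nat divn2.
Qed.

Theorem theorem2 (n k : nat) (hn : (0 < n)%N) (hk : (0 < k)%N) (N : nat)
    (hN : (n <= N)%N) :
  (#|Hom_path n k|)%:Z =
    (k * 2 ^ n.-1)%:Z
    - \sum_(i < n.-1)
        (2 ^ (n.-1 - i))%:Z *
        zsum_upto N (fun j : int =>
          binz i ((uphalf i)%:Z - j * (k.+1)%:Z)
          - binz i (((i + k.+1)./2)%:Z - j * (k.+1)%:Z)).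
Proof.
case: n hn hN => // m _ le_mN /=.
rewrite card_Hom_path sum_walks //; congr (_ - _); apply: eq_bigr => i _.
by rewrite (@walks_from0 k N) //; move: (ltn_ord i); lia.
Qed.
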